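(* Let $S,B\subseteq\{-1,1,*\}^X$ be binary hypothesis classes. For any $\varepsilon,\delta\ge0$ and $n\in\mathbb{Z}_{\ge0}$, every learner that solves comparative learning $\mathsf{CompL}_n(S,B,\varepsilon,\delta)$ also solves realizable learning $\mathsf{ReaL}_n(\mathbf{A}_{S,B},\varepsilon,\delta)$; i.e. $\mathsf{CompL}_n(S,B,\varepsilon,\delta)\subseteq\mathsf{ReaL}_n(\mathbf{A}_{S,B},\varepsilon,\delta)$.
   Context: $X$ is a non-empty set; hypotheses are functions $X\to\{-1,1,*\}$; distributions are discrete. For $s,b:X\to\{-1,1,*\}$, the agreement hypothesis $\mathbf{a}_{s,b}$ is $\mathbf{a}_{s,b}(x)=-1$ if $s(x)=b(x)=-1$, $=1$ if $s(x)=b(x)=1$, and $=*$ otherwise; $\mathbf{A}_{S,B}=\{\mathbf{a}_{s,b}:s\in S,b\in B\}$. A learner takes $n$ data points in $X\times\{-1,1\}$ and outputs $f:X\to\{-1,1\}$ (possibly randomized). It belongs to $\mathsf{ReaL}_n(H,\varepsilon,\delta)$ if for every distribution $\mu$ on $X\times\{-1,1\}$ with $\Pr_\mu[h(x)=y]=1$ for some $h\in H$, given $n$ i.i.d. samples from $\mu$, with probability $\ge1-\delta$ it outputs $f$ with $\Pr_\mu[f(x)\neq y]\le\varepsilon$. It belongs to $\mathsf{CompL}_n(S,B,\varepsilon,\delta)$ if for every distribution $\mu$ with $\Pr_\mu[s(x)=y]=1$ for some $s\in S$, with probability $\ge1-\delta$ it outputs $f$ with $\Pr_\mu[f(x)\ne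 y]\le\inf_{b\in B}\Pr_\mu[b(x)\ne y]+\varepsilon$ ($b(x)=*$ counts as an error). *)

From mathcomp Require Import all_boot all_order all_algebra.
From mathcomp Require Import all_classical all_reals.
From mathcomp Require Import ereal esum.
Set Implicit Arguments. Unset Strict Implicit. Unset Printing Implicit Defensive.
Import Order.TTheory GRing.Theory Num.Theory.
Local Open Scope classical_set_scope.
Local Open Scope ring_scope.

(* Labels {-1,1} are encoded by bool (false = -1, true = 1).
   Partial hypothesis values {-1,1,*} are encoded by option bool
   (Some false = -1, Some true = 1, None = * ). *)
Definition phyp (X : Type) := X -> option bool.

(* A data point (x,y) in X x {-1,1}; {classic _} only equips it with a choice
   structure (needed for esum), it is convertible to X * bool. *)
Definition pt (X : Type) := {classic (X * bool)}.

Definition is_distr (R : realType) (T : choiceType) (p : T -> R) : Prop :=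
  (forall t, 0 <= p t) /\ (\esum_(t in [set: T]) (p t)%:E = 1%E).

Definition prob (R : realType) (T : choiceType) (p : T -> R) (E : set T) : \bar R :=
  \esum_(t in E) (p t)%:E.

Definition agree (X : Type) (s b : phyp X) : phyp X :=
  fun x => if s x == b x then s x else None.

Definition agreeClass (X : Type) (S B : set (phyp X)) : set (phyp X) :=
  [set a | exists s b, S s /\ B b /\ a = agree s b].

Definition err (R : realType) (X : Type) (mu : pt X -> R) (h : phyp X) : \bar R :=
  prob mu [set xy : pt X | h xy.1 <> Some xy.2].

Definition tot (X : Type) (f : X -> bool) : phyp X := fun x => Some (f x).

Definition realizable (R : realType) (X : Type) (H : set (phyp X)) (mu : pt X -> R) : Prop :=
  exists2 h, H h & prob mu [set xy : pt X | h xy.1 = Some xy.2] = 1%E.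

(* A (possibly randomized) learner on n data points: maps each sample to a
   discrete distribution over output hypotheses X -> {-1,1}. *)
Definition learnerT (R : realType) (X : Type) (n : nat) :=
  ('I_n -> pt X) -> (X -> bool) -> R.

Definition is_learner (R : realType) (X : Type) (n : nat) (L : learnerT R X n) : Prop :=
  forall s, is_distr (L s).

Definition sample_dens (R : realType) (X : Type) (n : nat) (mu : pt X -> R)
  (s : 'I_n -> pt X) : R := \prod_(i < n) mu (s i).

Definition succ_prob (R : realType) (X : Type) (n : nat) (mu : pt X -> R)
  (L : learnerT R X n) (good : (X -> bool) -> Prop) : \bar R :=
  \esum_(sf in [set sf : ('I_n -> pt X) * (X -> bool) | good sf.2])
     (sample_dens mu sf.1 * L sf.1 sf.2)%:E.

Definition ReaL (R : realType) (X : Type) (n : nat) (H : set (phyp X))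
  (eps delta : R) (L : learnerT R X n) : Prop :=
  forall mu : pt X -> R, is_distr mu -> realizable H mu ->
    ((1 - delta)%:E <= succ_prob mu L (fun f => err mu (tot f) <= eps%:E))%E.

Definition CompL (R : realType) (X : Type) (n : nat) (S B : set (phyp X))
  (eps delta : R) (L : learnerT R X n) : Prop :=
  forall mu : pt X -> R, is_distr mu -> realizable S mu ->
    ((1 - delta)%:E <= succ_prob mu L
       (fun f => err mu (tot f) <= ereal_inf [set err mu b | b in B] + eps%:E))%E.

From mathcomp Require Import all_boot all_order all_algebra.
From mathcomp Require Import all_classical all_reals.
From mathcomp Require Import ereal esum.
From mathcomp Require Import lra.
Set Implicit Arguments. Unset Strict Implicit. Unset Printing Implicit Defensive.
Import Order.TTheory GRing.Theory Num.Theory.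
Local Open Scope classical_set_scope.
Local Open Scope ring_scope.

(* If mu is realized by a_{s,b}, then s realizes mu (wherever a_{s,b}(x) = y
   also s(x) = y), and b has error 0 (wherever b(x) <> y also a_{s,b}(x) <> y).
   So comparative learning's target inf_b err(b) + eps is at most eps, and
   comparative success entails realizable success for the same learner. *)

Lemma le_esum_subset (R : realType) (T : choiceType) (a : T -> \bar R)
    (E F : set T) :
  (forall t, 0 <= a t)%E -> E `<=` F ->
  (\esum_(t in E) a t <= \esum_(t in F) a t)%E.
Proof.
move=> a_ge0 EF; rewrite (esum_mkcond E) (esum_mkcond F); apply: le_esum => t _.
case: ifPn => [/set_mem/EF/mem_set -> //|_]; by case: ifP.
Qed.

Section DiscreteProbability.
Variables (R : realType) (T : choiceType) (p : T -> R).
Hypothesis p_distr : is_distr p.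

Let p_ge0 t : (0 <= (p t)%:E)%E.
Proof. by rewrite lee_fin; case: p_distr. Qed.

Lemma prob_ge0 E : (0 <= prob p E)%E.
Proof. exact: esum_ge0. Qed.

Lemma le_prob E F : E `<=` F -> (prob p E <= prob p F)%E.
Proof. exact: le_esum_subset. Qed.

Lemma prob_le1 E : (prob p E <= 1)%E.
Proof. by case: p_distr => _ <-; apply: le_prob. Qed.

Lemma prob1_subset E F : E `<=` F -> prob p E = 1%E -> prob p F = 1%E.
Proof.
by move=> EF pE1; apply/eqP; rewrite eq_le prob_le1 -pE1 le_prob.
Qed.

Lemma prob1_setC E : prob p E = 1%E -> prob p (~` E) = 0%E.
Proof.
move=> pE1; have := esumID E [set: T] (fun t => (p t)%:E) (fun t _ => p_ge0 t).
case: p_distr => _ ->; rewrite !setTI -/(prob p E) -/(prob p (~` E)) pE1.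
have := prob_ge0 (~` E); case: (prob p (~` E)) => [r||] //= r_ge0.
by move/eqP; rewrite -EFinD eqe => /eqP r0; congr (_%:E); lra.
Qed.

End DiscreteProbability.

Section AgreementRealizability.
Variables (R : realType) (X : Type) (mu : pt X -> R).
Hypothesis mu_distr : is_distr mu.

Lemma realizable_agreeClass_l (S B : set (phyp X)) :
  realizable (agreeClass S B) mu -> realizable S mu.
Proof.
move=> [_ [s [b [Ss [_ ->]]]] agree1]; exists s => //.
apply: prob1_subset agree1 => // xy /=.
by rewrite /agree; case: eqP => // _ ->.
Qed.

Lemma err_agree_r (s b : phyp X) :
  prob mu [set xy : pt X | agree s b xy.1 = Some xy.2] = 1%E -> err mu b = 0%E.
Proof.
move=> agree1; apply/eqP; rewrite eq_le prob_ge0 // andbT.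
rewrite -(prob1_setC mu_distr agree1) le_prob // => xy /= b_err agree_xy.
by apply: b_err; move: agree_xy; rewrite /agree; case: eqP => // <-.
Qed.

Lemma realizable_agreeClass_inf_err (S B : set (phyp X)) :
  realizable (agreeClass S B) mu -> (ereal_inf [set err mu b | b in B] <= 0)%E.
Proof.
move=> [_ [s [b [_ [Bb ->]]]] agree1].
by rewrite -(err_agree_r agree1) ereal_inf_lbound //; exists b.
Qed.

End AgreementRealizability.

Lemma le_succ_prob (R : realType) (X : Type) (n : nat) (mu : pt X -> R)
    (L : learnerT R X n) (good good' : (X -> bool) -> Prop) :
  is_distr mu -> is_learner L -> (forall f, good f -> good' f) ->
  (succ_prob mu L good <= succ_prob mu L good')%E.
Proof.
move=> [mu_ge0 _] L_distr good_good'; apply: le_esum_subset => [sf|sf /good_good' //].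
rewrite lee_fin mulr_ge0 //; last by case: (L_distr sf.1).
by apply: prodr_ge0 => i _.
Qed.

Theorem lemma3p7 (R : realType) (X : Type) (x0 : X) (S B : set (phyp X))
  (eps delta : R) (n : nat) (L : learnerT R X n) :
  0 <= eps -> 0 <= delta -> is_learner L ->
  CompL S B eps delta L -> ReaL (agreeClass S B) eps delta L.
Proof.
move=> _ _ L_learner L_comp mu mu_distr mu_real.
have inf_le0 := realizable_agreeClass_inf_err mu_distr mu_real.
apply: le_trans (L_comp mu mu_distr (realizable_agreeClass_l mu_distr mu_real)) _.
apply: le_succ_prob => // f /le_trans; apply.
by rewrite -[leRHS]add0e leeD.
Qed.
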